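(* For every integer $n\geq 2$, both $d(n)$ and $-\frac{d(n)}{n-1}$ are eigenvalues of the adjacency matrix of the permutation graph $P(n)$.
   Context: $d(n)$ is the number of derangements (fixed-point-free permutations) of $\{1,\dots,n\}$. The permutation graph $P(n)$ has vertex set $S(n)$, and $\pi,\sigma$ are adjacent iff $\pi(i)\neq\sigma(i)$ for all $i$. *)

From HB Require Import structures.
From mathcomp Require Import all_boot all_order all_algebra all_fingroup.
Set Implicit Arguments. Unset Strict Implicit. Unset Printing Implicit Defensive.
Import GRing.Theory Num.Theory.

Definition derangements (n : nat) : nat :=
  #|[set s : 'S_n | [forall i, s i != i]]|.

Definition perm_adj (n : nat) (p q : 'S_n) : bool := [forall i, p i != q i].

Definition nverts (n : nat) : nat := #|{perm 'I_n}|.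

Definition perm_graph_adj (R : nzRingType) (n : nat) : 'M[R]_(nverts n) :=
  \matrix_(i, j) ((perm_adj (enum_val i) (enum_val j))%:R)%R.

From HB Require Import structures.
From mathcomp Require Import all_boot all_order all_algebra all_fingroup.
From mathcomp Require Import ring.
Import GRing.Theory Num.Theory.
Set Implicit Arguments. Unset Strict Implicit. Unset Printing Implicit Defensive.
Local Open Scope ring_scope.

(* P(n) is the Cayley graph of 'S_n generated by the derangements: p and q
   are adjacent iff p * q^-1 is fixed-point free.  Hence, identifying a row
   vector with a function F on 'S_n, the adjacency matrix acts by
   F |-> (q |-> \sum_(s derangement) F (s * q)).  Two eigenvectors follow:
   - the constant function 1, with eigenvalue d(n);
   - F p = n [p i = i] - 1 for a fixed point i.  Evaluating the action at q
     requires the number c of derangements s with s i = q^-1 i: c = 0 when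
     q i = i, and c = d(n) / (n - 1) otherwise, since conjugating by a
     transposition shows that all n - 1 possible values s i != i are taken
     equally often.  This gives the eigenvalue -d(n)/(n - 1). *)

Definition is_derangement (n : nat) (s : 'S_n) : bool := [forall x, s x != x].

Definition perm_row (R : nzRingType) (n : nat) (F : 'S_n -> R) :
    'rV[R]_(nverts n) :=
  \row_i F (enum_val i).

Section AdjacencyAction.

Variables (R : nzRingType) (n : nat).

Lemma perm_adj_mull (s q : 'S_n) : perm_adj (s * q)%g q = is_derangement s.
Proof.
by apply/forallP/forallP => H x; have := H x; rewrite permM (inj_eq perm_inj).
Qed.

Lemma perm_row_mul_adj (F : 'S_n -> R) :
  perm_row F *m perm_graph_adj R n =
  perm_row (fun q => \sum_(s | is_derangement s) F (s * q)%g).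
Proof.
apply/rowP => j; rewrite !mxE; set q := enum_val j.
under eq_bigr do rewrite !mxE.
rewrite -(big_enum_val (A := predT) (fun p => F p * (perm_adj p q)%:R)) /=.
rewrite (reindex (fun s => s * q)%g) /=; last first.
  by exists (fun p => p * q^-1)%g => s _; rewrite ?mulgK ?mulgKV.
rewrite [RHS]big_mkcond; apply: eq_bigr => s _.
by rewrite perm_adj_mull; case: ifP; rewrite ?mulr1 ?mulr0.
Qed.

Lemma perm_row_neq0 (F : 'S_n -> R) (p : 'S_n) :
  F p != 0 -> perm_row F != 0.
Proof.
move=> Fp; apply: contra Fp => /eqP /rowP /(_ (enum_rank p)).
by rewrite !mxE enum_rankK => ->.
Qed.

Lemma sum_derangements_const (x : R) :
  \sum_(s : 'S_n | is_derangement s) x = x *+ derangements n.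
Proof. by rewrite sumr_const /derangements cardsE. Qed.

End AdjacencyAction.

Lemma perm_graph_eigenvalue (R : fieldType) (n : nat) (F : 'S_n -> R)
    (a : R) (p : 'S_n) :
  (forall q, \sum_(s | is_derangement s) F (s * q)%g = a * F q) ->
  F p != 0 -> eigenvalue (perm_graph_adj R n) a.
Proof.
move=> eigF Fp; apply/eigenvalueP; exists (perm_row F).
  by rewrite perm_row_mul_adj; apply/rowP => j; rewrite !mxE eigF.
exact: perm_row_neq0 Fp.
Qed.

Section DerangementsThrough.

Variables (n : nat) (i : 'I_n).

Definition derangements_to (k : 'I_n) : nat :=
  #|[set s : 'S_n | is_derangement s & s i == k]|.

Lemma derangements_to_self : derangements_to i = 0%N.
Proof.
apply: eq_card0 => s; rewrite inE.
apply/negbTE/andP => -[/forallP /(_ i) + /eqP si]; by rewrite si eqxx.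
Qed.

(* Conjugation by the transposition (k k'), which fixes i, maps the
   derangements sending i to k into those sending i to k'. *)
Lemma derangements_to_le (k k' : 'I_n) :
  k != i -> k' != i -> (derangements_to k <= derangements_to k')%N.
Proof.
move=> ki k'i; set t := tperm k k'.
rewrite /derangements_to -(card_imset _ (conjg_inj t)).
apply/subset_leq_card/subsetP => _ /imsetP [s + ->].
rewrite !inE => /andP [/forallP der_s /eqP si].
have ti : t i = i by rewrite tpermD // eq_sym.
apply/andP; split; last by rewrite -{1}ti permJ si tpermL.
by apply/forallP => x; rewrite -{1 2}(tpermK k k' x) permJ (inj_eq perm_inj).
Qed.

Lemma derangements_to_eq (k k' : 'I_n) :
  k != i -> k' != i -> derangements_to k = derangements_to k'.
Proof.
by move=> ki k'i; apply/eqP; rewrite eqn_leq !derangements_to_le.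
Qed.

(* Partitioning the derangements by the image of i:
   d(n) = (n - 1) * #{derangements sending i to k} for any k != i. *)
Lemma derangements_through (k : 'I_n) :
  k != i -> derangements n = (n.-1 * derangements_to k)%N.
Proof.
move=> ki; rewrite /derangements -sum1_card.
rewrite (partition_big (fun s : 'S_n => s i) predT) //=.
have card_to j : \sum_(s in [set s | is_derangement s] | s i == j) 1 =
                 derangements_to j.
  by rewrite sum1dep_card; apply: eq_card => s; rewrite !inE.
rewrite (bigD1 i) //= card_to derangements_to_self add0n.
rewrite (eq_bigr (fun=> derangements_to k)) => [|j ji]; last first.
  by rewrite -(derangements_to_eq ji ki); exact: card_to.
by rewrite sum_nat_const cardC1 card_ord.
Qed.

(* Since (s * q) i = q (s i), the translate s * q fixes i iff s i = q^-1 i;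
   this counts the derangements whose translate by q fixes i. *)
Lemma sum_derangements_fix (R : nzRingType) (q : 'S_n) :
  \sum_(s | is_derangement s) (((s * q)%g i == i)%:R : R) =
  (derangements_to (q^-1%g i))%:R.
Proof.
rewrite /derangements_to cardsE -sum1_card natr_sum big_mkcondr /=.
apply: eq_bigr => s _.
by rewrite permM -(inj_eq (@perm_inj _ q^-1%g)) permK; case: eqP.
Qed.

End DerangementsThrough.

Lemma eigenvalue_derangements (R : fieldType) (n : nat) :
  eigenvalue (perm_graph_adj R n) (derangements n)%:R.
Proof.
apply: (@perm_graph_eigenvalue _ _ (fun=> 1) _ 1%g) => [q|]; last exact: oner_neq0.
by rewrite sum_derangements_const mulr1.
Qed.

Lemma eigenvalue_derangements_ratio (R : numFieldType) (n : nat) :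
  (2 <= n)%N -> eigenvalue (perm_graph_adj R n) (- ((derangements n)%:R / (n.-1)%:R)).
Proof.
case: n => [|N] // N_gt0; set i : 'I_N.+1 := ord0.
have N_neq0 : (N%:R : R) != 0 by rewrite pnatr_eq0 -lt0n.
pose F (p : 'S_N.+1) : R := N.+1%:R * (p i == i)%:R - 1.
apply: (@perm_graph_eigenvalue _ _ F _ 1%g) => [q|]; last first.
  by rewrite /F perm1 eqxx mulr1 -natr1 addrK.
rewrite /F sumrB -mulr_sumr sum_derangements_fix sum_derangements_const.
have [qi|qi] := eqVneq (q i) i.
- have qVi : q^-1%g i = i by rewrite -{1}qi permK.
  by rewrite qVi derangements_to_self mulr1n -natr1; field.
- have qVi : q^-1%g i != i by rewrite -(inj_eq (@perm_inj _ q)) permKV eq_sym.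
  by rewrite (derangements_through qVi) mulr0n natrM -natr1; field.
Qed.

Theorem lemma7 (R : numFieldType) (n : nat) (hn : (2 <= n)%N) :
  eigenvalue (perm_graph_adj R n) (derangements n)%:R /\
  eigenvalue (perm_graph_adj R n) (- ((derangements n)%:R / (n.-1)%:R)).
Proof.
split; [exact: eigenvalue_derangements | exact: eigenvalue_derangements_ratio].
Qed.
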